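(* Let $\mathcal F$ be a filtration array, $E=(E_{m,n})_{m,n\in\mathbb N}$ a nonnegative process adapted to $\mathcal F$, and $S=(S_n)_{n\in\mathbb N}$ a process adapted to $\mathcal F_{\infty,\bullet}$. If $E$ has the asymptotic supermartingale property (in $L_1$, for $\mathcal F$, uniformly in $\mathcal P$) and $E$ converges to $S$ in $L_1$ uniformly in $\mathcal P$, then $S$ is a supermartingale for $\mathcal P$ with respect to $\mathcal F_{\infty,\bullet}$.
   Context: $(\Omega,\mathcal A)$ is a measurable space, $\mathcal P$ a set of probability measures on it, $\mathbb N=\{0,1,\dots\}$. A filtration array is a family $(\mathcal F_{m,n})_{m,n\in\mathbb N}$ of sub-$\sigma$-algebras with $\mathcal F_{m,n}\subset\mathcal F_{m+1,n}\cap\mathcal F_{m,n+1}$; $\mathcal F_{\infty,n}:=\sigma(\bigcup_m\mathcal F_{m,n})$. Adapted means $E_{m,n}$ is $\mathcal F_{m,n}$-measurable. For $P\in\mathcal P$, $\delta_{m,n}=\mathbb E_P[E_{m,n+1}\mid\mathcal F_{m,n}]-E_{m,n}$ if $E_{m,n+1}$ is $P$-integrable and $\delta_{m,n}=\infty$ otherwise; $x^+=\max\{x,0\}$. The asymptotic supermartingale property: $\lim_m\sup_{P\in\mathcal P}\mathbb E_P[\delta_{m,n}^+]=0$ for every $n$. $E$ converges to $S$ in $L_1$ uniformly in $\mathcal P$ if all $E_{m,n},S_n$ are $P$-integrable for all $P\in\mathcal P$ and $\lim_m\sup_{P\in\mathcal P}\mathbb E_P[|E_{m,n}-S_n|]=0$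 for every $n$. A supermartingale for $\mathcal P$ w.r.t. a filtration $\mathcal G$ is a $\mathcal G$-adapted process with each $S_n$ $P$-integrable and $\mathbb E_P[S_{n+1}\mid\mathcal G_n]\le S_n$ $P$-a.s. for all $P\in\mathcal P$, $n$. *)

From HB Require Import structures.
From mathcomp Require Import all_boot all_order all_algebra.
From mathcomp Require Import all_classical all_reals all_analysis.
Set Implicit Arguments. Unset Strict Implicit. Unset Printing Implicit Defensive.
Import Order.TTheory GRing.Theory Num.Theory.
Local Open Scope classical_set_scope.
Local Open Scope ring_scope.

Section Defs.
Context {d : measure_display} {T : measurableType d} {R : realType}.

Definition sub_sigma (G : set (set T)) : Prop :=
  sigma_algebra setT G /\ G `<=` measurable.

Definition filtration_array (F : nat -> nat -> set (set T)) : Prop :=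
  (forall m n, sub_sigma (F m n)) /\
  (forall m n, F m n `<=` F m.+1 n /\ F m n `<=` F m n.+1).

Definition F_infty (F : nat -> nat -> set (set T)) (n : nat) : set (set T) :=
  <<s \bigcup_m F m n >>.

Definition Gmeasurable (G : set (set T)) (f : T -> R) : Prop :=
  forall B : set R, measurable B -> G (f @^-1` B).

Definition Pintegrable (P : probability T R) (f : T -> R) : Prop :=
  P.-integrable setT (EFin \o f).

Definition is_cond_exp (P : probability T R) (G : set (set T)) (X Y : T -> R) : Prop :=
  [/\ Gmeasurable G Y, Pintegrable P Y &
      forall A, G A -> (\int[P]_(x in A) (Y x)%:E = \int[P]_(x in A) (X x)%:E)%E].

(** a (chosen) version of E_P[X | G]; it is a genuine version whenever one
    exists, in particular whenever X is P-integrable and G is a sub-sigma-algebra *)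
Definition cond_exp (P : probability T R) (G : set (set T)) (X : T -> R) : T -> R :=
  xget (fun _ => 0) (is_cond_exp P G X).

Definition pos_part (x : R) : R := Num.max x 0.

Definition exp_delta_plus (P : probability T R) (G : set (set T)) (X Z : T -> R)
  : \bar R :=
  if `[< Pintegrable P X >] then
    (\int[P]_x (pos_part (cond_exp P G X x - Z x))%:E)%E
  else +oo%E.

(** asymptotic supermartingale property, uniformly in Pset:
    lim_m sup_{P in Pset} E_P[delta_{m,n}^+] = 0 for every n
    (stated in epsilon form; all quantities are >= 0) *)
Definition asymptotic_supermartingale (Pset : set (probability T R))
  (F : nat -> nat -> set (set T)) (E : nat -> nat -> T -> R) : Prop :=
  forall n (eps : R), 0 < eps -> exists M : nat, forall m, (M <= m)%N ->
    forall P, Pset P -> (exp_delta_plus P (F m n) (E m n.+1) (E m n) <= eps%:E)%E.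

Definition L1_unif_conv (Pset : set (probability T R))
  (E : nat -> nat -> T -> R) (S : nat -> T -> R) : Prop :=
  (forall P, Pset P -> forall m n, Pintegrable P (E m n) /\ Pintegrable P (S n)) /\
  (forall n (eps : R), 0 < eps -> exists M : nat, forall m, (M <= m)%N ->
    forall P, Pset P -> (\int[P]_x (`|E m n x - S n x|)%:E <= eps%:E)%E).

Definition supermartingale (Pset : set (probability T R))
  (G : nat -> set (set T)) (S : nat -> T -> R) : Prop :=
  (forall n, Gmeasurable (G n) (S n)) /\
  forall P, Pset P -> forall n, Pintegrable P (S n) /\
    {ae P, forall x, cond_exp P (G n) (S n.+1) x <= S n x}.

End Defs.

From HB Require Import structures.
From mathcomp Require Import all_boot all_order all_algebra.
From mathcomp Require Import all_classical all_reals all_analysis.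
From mathcomp Require Import measurable_realfun lra zify.
Import Order.TTheory GRing.Theory Num.Theory.
Local Open Scope classical_set_scope.
Local Open Scope ring_scope.

Set Implicit Arguments.
Unset Strict Implicit.
Unset Printing Implicit Defensive.

(* For [A] in [F m0 n] and every [m >= m0], [A] lies in [F m n], so
     \int_A S_{n+1} ~ \int_A E_{m,n+1} = \int_A E[E_{m,n+1} | F_{m,n}]
                    <= \int_A E_{m,n} + E[delta_{m,n}^+] ~ \int_A S_n,
   where every error vanishes as [m -> oo], uniformly in [P].  Hence
   [\int_A S_{n+1} <= \int_A S_n] on the ring of sets [\bigcup_m F m n].  The
   sets satisfying this inequality form a monotone class (dominated
   convergence), so it extends to [F_infty F n]; applied to the set
   [{S_n < E[S_{n+1} | F_infty F n]}] it forces that set to be null.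
   Conditional expectations exist by the Radon-Nikodym theorem on the
   sub-sigma-algebra. *)

Section sub_sigma.
Context d (T : measurableType d) (R : realType) (G : set (set T)).
Hypothesis hG : sub_sigma G.

Lemma sub_sigma_measurableE : G.-sigma.-measurable = G.
Proof. exact: measurable_g_measurableTypeE hG.1. Qed.

(* Restricting a measure on [T] to [G] is pushing it forward along this map. *)
Definition sub_sigma_id (x : T) : g_sigma_algebraType G := x.

Lemma measurable_sub_sigma_id : measurable_fun [set: T] sub_sigma_id.
Proof.
by move=> _ B; rewrite sub_sigma_measurableE setTI => /hG.2.
Qed.

Lemma Gmeasurable_measurable_fun (f : T -> R) : Gmeasurable G f ->
  measurable_fun [set: g_sigma_algebraType G] f.
Proof. by move=> Gf _ B mB; rewrite setTI sub_sigma_measurableE; exact: Gf. Qed.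

End sub_sigma.

Section cond_exp_existence.
Context d (T : measurableType d) (R : realType) (P : probability T R).
Context (G : set (set T)) (hG : sub_sigma G) (X : T -> R) (hX : Pintegrable P X).

Let TG := g_sigma_algebraType G.
Local Notation idG := (sub_sigma_id G).
Local Open Scope ereal_scope.

Let midG : measurable_fun [set: T] idG := measurable_sub_sigma_id hG.

HB.instance Definition _ := isMeasurableFun.Build _ _ T TG idG midG.

Let measurable_preimage_idG (A : set TG) : measurable A -> measurable (idG @^-1` A).
Proof. by move=> mA; rewrite -[X in measurable X]setTI; exact: midG. Qed.

(* The signed measure [A |-> \int_A X dP] restricted to [G]; its density with
   respect to [P] restricted to [G] is a version of [E[X | G]]. *)
Definition trace_charge := pushforward (induced_charge hX) idG.

Let trace_charge0 : trace_charge set0 = 0.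
Proof. by rewrite /trace_charge /pushforward preimage_set0 charge0. Qed.

Let trace_charge_fin_num A : measurable A -> trace_charge A \is a fin_num.
Proof. by move=> mA; apply: fin_num_measure. Qed.

Let trace_charge_sigma_additive : semi_sigma_additive trace_charge.
Proof.
move=> A mA tA mUA; rewrite /trace_charge /pushforward preimage_bigcup.
apply: charge_semi_sigma_additive.
- by move=> n; exact: measurable_preimage_idG.
- apply/trivIsetP => /= i j _ _ ij; rewrite -preimage_setI.
  by move/trivIsetP : tA => /(_ _ _ _ _ ij) ->//; rewrite preimage_set0.
- by rewrite -preimage_bigcup; exact: measurable_preimage_idG.
Qed.

HB.instance Definition _ := isCharge.Build _ _ _ trace_charge
  trace_charge0 trace_charge_fin_num trace_charge_sigma_additive.

Let trace_charge_dominates : trace_charge `<< distribution P idG.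
Proof.
apply/null_content_dominatesP => /= A mA PA0.
apply: null_set_integral => //=; first exact: measurable_preimage_idG.
exact: measurable_funS measurableT (@subsetT _ _) (measurable_int _ hX).
Qed.

Let f : TG -> \bar R := Radon_Nikodym trace_charge (distribution P idG).

Let f_fin_num x : f x \is a fin_num.
Proof. exact: Radon_Nikodym_fin_num trace_charge_dominates. Qed.

Let f_integrable : (distribution P idG).-integrable setT f.
Proof. exact: Radon_Nikodym_integrable trace_charge_dominates. Qed.

Let mf := measurable_int _ f_integrable.

Let mf_idG : measurable_fun setT (f \o idG).
Proof. exact: measurableT_comp mf midG. Qed.

Let f_idG_integrable A : measurable A -> P.-integrable A (f \o idG).
Proof.
move=> mA; apply: (integrableS measurableT) => //.
apply/integrableP; split; first exact: mf_idG.
move/integrableP: f_integrable => [_].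
rewrite -(@ge0_integral_pushforward _ _ _ _ _ idG midG P setT (abse \o f)) //.
- exact: measurableT_comp.
- by move=> y _; exact: abse_ge0.
Qed.

Lemma cond_exp_exists : exists Y, is_cond_exp P G X Y.
Proof.
have fE : EFin \o (fun x => fine (f (idG x))) = f \o idG.
  by apply/funext => x /=; rewrite fineK.
exists (fun x => fine (f (idG x))); split.
- move=> B mB; rewrite -(sub_sigma_measurableE hG).
  have := measurableT_comp (@fine_measurable R setT measurableT) mf measurableT mB.
  by rewrite setTI.
- by rewrite /Pintegrable fE; exact: f_idG_integrable.
- move=> A GA; have mA : measurable A by exact: hG.2.
  have mAG : measurable (A : set TG) by rewrite sub_sigma_measurableE.
  transitivity (\int[P]_(x in A) (f \o idG) x).
    by apply: eq_integral => x _; rewrite /= fineK.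
  rewrite -(@integral_pushforward _ _ _ _ _ idG midG P A f mf (f_idG_integrable mA) mAG).
  exact: esym (Radon_Nikodym_integral trace_charge_dominates mAG).
Qed.

End cond_exp_existence.

Lemma is_cond_exp_cond_exp d (T : measurableType d) (R : realType)
    (P : probability T R) (G : set (set T)) (X : T -> R) :
  sub_sigma G -> Pintegrable P X -> is_cond_exp P G X (cond_exp P G X).
Proof. by move=> hG hX; apply: xgetPex; exact: cond_exp_exists. Qed.

Section integrals.
Context d (T : measurableType d) (R : realType) (P : probability T R).
Implicit Types (f g h : T -> R) (A : set T).

Lemma PintegrableB f g : Pintegrable P f -> Pintegrable P g -> Pintegrable P (f \- g).
Proof. exact: integrableB. Qed.

Lemma Pintegrable_norm f : Pintegrable P f -> Pintegrable P (fun x => `|f x|).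
Proof. exact: integrable_abse. Qed.

Lemma Pintegrable_pos_part f : Pintegrable P f -> Pintegrable P (fun x => pos_part (f x)).
Proof.
move=> hf; rewrite /Pintegrable (_ : EFin \o _ = ((EFin \o f)^\+)%E).
  exact: integrable_funepos.
by apply/funext => x; rewrite funeposE /= /pos_part EFin_max.
Qed.

Local Open Scope ereal_scope.

Lemma set_integral_le_add A f g h : measurable A ->
  Pintegrable P f -> Pintegrable P g -> Pintegrable P h ->
  (forall x, 0 <= h x)%R -> (forall x, f x <= g x + h x)%R ->
  \int[P]_(x in A) (f x)%:E <= \int[P]_(x in A) (g x)%:E + \int[P]_x (h x)%:E.
Proof.
move=> mA hf hg hh h0 fgh.
have intA k : Pintegrable P k -> P.-integrable A (EFin \o k).
  by move=> hk; exact: integrableS hk.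
apply: (@le_trans _ _ (\int[P]_(x in A) (g x)%:E + \int[P]_(x in A) (h x)%:E)).
  rewrite -integralD_EFin; [|done|exact: intA..].
  apply: le_integral => //; [exact: intA f hf|exact: integrableD (intA _ hg) (intA _ hh)|].
  by move=> x _; rewrite lee_fin.
apply: leeD2l; apply: ge0_subset_integral => //; first exact: measurable_int hh.
by move=> x _; rewrite lee_fin.
Qed.

Lemma set_integral_cvg f (A_ : (set T)^nat) A :
  Pintegrable P f -> (forall k, measurable (A_ k)) -> measurable A ->
  (forall x, \forall k \near \oo, A_ k x <-> A x) ->
  \int[P]_(x in A_ k) (f x)%:E @[k --> \oo] --> \int[P]_(x in A) (f x)%:E.
Proof.
move=> hf mA_ mA A_A.
under eq_fun do rewrite integral_mkcond; rewrite integral_mkcond.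
have mf : measurable_fun setT (EFin \o f) := measurable_int _ hf.
apply: (@dominated_cvg _ _ _ P setT measurableT _ _ (abse \o (EFin \o f))).
- by move=> k; apply/(measurable_restrictT _ (mA_ k)); exact: measurable_funTS.
- move=> x _; apply: cvg_near_cst; apply: filterS (A_A x) => k [A_kA AA_k].
  rewrite /patch; case: ifPn => [/set_mem/A_kA/mem_set -> //|].
  by case: ifPn => // /set_mem/AA_k/mem_set ->.
- by [].
- exact: integrable_abse.
- move=> k x _; rewrite /patch; case: ifP => _ //.
  by rewrite abse0 lee_fin.
Qed.

(* The conditional expectation is a.s. dominated by any [G]-measurable [Z] that
   dominates [X] in the mean on every set of [G]: otherwise the mean of
   [cond_exp P G X - Z] over [{Z < cond_exp P G X}] would be positive. *)
Lemma cond_exp_le_ae G (X Z : T -> R) : sub_sigma G ->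
  Pintegrable P X -> Pintegrable P Z -> Gmeasurable G Z ->
  (forall A, G A -> \int[P]_(x in A) (X x)%:E <= \int[P]_(x in A) (Z x)%:E) ->
  {ae P, forall x, (cond_exp P G X x <= Z x)%R}.
Proof.
move=> hG iX iZ mZ XZ; set Y := cond_exp P G X.
have [mY iY hY] := is_cond_exp_cond_exp hG iX.
pose A := [set x | (Z x < Y x)%R].
have GA : G A.
  have ZY := measurable_fun_ltr (Gmeasurable_measurable_fun hG mZ)
    (Gmeasurable_measurable_fun hG mY).
  have := ZY measurableT [set true] I.
  by rewrite setTI sub_sigma_measurableE.
have mA : measurable A := hG.2 _ GA.
have YZ_A : \int[P]_(x in A) (Y x)%:E =
    \int[P]_(x in A) (Z x)%:E + \int[P]_(x in A) (`|Y x - Z x|%R)%:E.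
  rewrite -integralD_EFin //; [|exact: integrableS iZ|].
    apply: eq_integral => x /set_mem Ax.
    by rewrite /= gtr0_norm ?subr_gt0 // -EFinD addrC subrK.
  exact: integrableS (Pintegrable_norm (PintegrableB iY iZ)).
have int0 : \int[P]_(x in A) (`|Y x - Z x|%R)%:E = 0.
  apply/eqP; rewrite eq_le integral_ge0 ?andbT; last by move=> x _; rewrite lee_fin.
  have ZA_fin : \int[P]_(x in A) (Z x)%:E \is a fin_num.
    exact: integrable_fin_num (integrableS _ _ _ iZ).
  by rewrite -(leeD2lE _ _ ZA_fin) adde0 -YZ_A hY //; exact: XZ.
have : ae_eq P A (EFin \o (Y \- Z)%R) (cst 0).
  apply/(ae_eq_integral_abs _ mA); last exact: int0.
  exact: measurable_funTS (measurable_int _ (PintegrableB iY iZ)).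
apply: filterS => x YZ0; rewrite leNgt; apply/negP => ZY.
by move: (YZ0 ZY) => /= /eqP; rewrite eqe subr_eq0 => /eqP YZ; rewrite YZ ltxx in ZY.
Qed.

End integrals.

Section increasing_sub_sigma.
Context d (T : measurableType d) (R : realType) (H : nat -> set (set T)).
Hypothesis H_sub_sigma : forall m, sub_sigma (H m).
Hypothesis H_nondecreasing : forall m, H m `<=` H m.+1.

Lemma le_sub_sigma_seq m m' : (m <= m')%N -> H m `<=` H m'.
Proof.
elim: m' => [|m' IH]; first by rewrite leqn0 => /eqP ->.
rewrite leq_eqVlt => /orP[/eqP -> //|/IH Hmm'].
by move=> A /Hmm' /H_nondecreasing.
Qed.

Lemma setring_bigcup_sub_sigma : setring (\bigcup_m H m).
Proof.
have measH m : H m = (H m).-sigma.-measurable.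
  by rewrite sub_sigma_measurableE.
have Hmaxn a b A B : H a A -> H b B -> H (maxn a b) A /\ H (maxn a b) B.
  move=> HA HB; split; first exact: le_sub_sigma_seq (leq_maxl a b) _ HA.
  exact: le_sub_sigma_seq (leq_maxr a b) _ HB.
split.
- by exists 0%N => //; rewrite measH; exact: measurable0.
- move=> A B [a _ HA] [b _ HB]; exists (maxn a b) => //.
  have [] := Hmaxn _ _ _ _ HA HB; rewrite measH; exact: measurableU.
- move=> A B [a _ HA] [b _ HB]; exists (maxn a b) => //.
  have [] := Hmaxn _ _ _ _ HA HB; rewrite measH; exact: measurableD.
Qed.

Lemma sub_sigma_g_sigma_bigcup : sub_sigma <<s \bigcup_m H m>>.
Proof.
split; first exact: smallest_sigma_algebra.
apply: smallest_sub; first exact: sigma_algebra_measurable.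
by move=> A [m _ HA]; exact: (H_sub_sigma m).2.
Qed.

Lemma g_sigma_bigcup_sub_g_sigma_ring :
  <<s \bigcup_m H m>> `<=` <<sr \bigcup_m H m>>.
Proof.
apply: smallest_sub; last exact: sub_smallest.
have [sr0 srD srU] := smallest_sigma_ring (\bigcup_m H m).
split => // A srA; apply: (srD setT A _ srA).
apply: sub_g_sigma_ring; exists 0%N => //.
have [H00 H0D _] := (H_sub_sigma 0).1.
by have := H0D _ H00; rewrite setD0.
Qed.

Local Open Scope ereal_scope.

(* The sets on which the inequality holds are closed under monotone limits by
   dominated convergence, and [\bigcup_m H m] is a ring of sets containing
   [setT], so the monotone class theorem applies. *)
Lemma set_integral_le_g_sigma_bigcup (P : probability T R) (f g : T -> R) :
  Pintegrable P f -> Pintegrable P g ->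
  (forall m A, H m A -> \int[P]_(x in A) (f x)%:E <= \int[P]_(x in A) (g x)%:E) ->
  forall A, <<s \bigcup_m H m>> A ->
    \int[P]_(x in A) (f x)%:E <= \int[P]_(x in A) (g x)%:E.
Proof.
move=> hf hg fg A /g_sigma_bigcup_sub_g_sigma_ring.
pose C := [set B : set T | measurable B /\
  \int[P]_(x in B) (f x)%:E <= \int[P]_(x in B) (g x)%:E].
suff : <<sr \bigcup_m H m>> `<=` C by move=> srC /srC[].
apply: monotone_setring_sub_g_sigma_ring setring_bigcup_sub_sigma _; last first.
  by move=> B [m _ HB]; split; [exact: (H_sub_sigma m).2 | exact: fg HB].
have C_lim (A_ : (set T)^nat) B : (forall k, C (A_ k)) -> measurable B ->
    (forall x, \forall k \near \oo, A_ k x <-> B x) -> C B.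
  move=> CA mB A_B; split => //.
  have mA_ k : measurable (A_ k) := (CA k).1.
  have cvgf := set_integral_cvg hf mA_ mB A_B.
  have cvgg := set_integral_cvg hg mA_ mB A_B.
  rewrite -(cvg_lim (@ereal_hausdorff R) cvgf) -(cvg_lim (@ereal_hausdorff R) cvgg).
  apply: lee_lim; [exact: cvgP cvgf|exact: cvgP cvgg|].
  by apply: nearW => k; exact: (CA k).2.
split => A_ A_mono CA.
- apply: (C_lim A_) => //; first by apply: bigcupT_measurable => k; exact: (CA k).1.
  move=> x; have [[k0 _ A_k0x]|nU] := pselect ((\bigcup_k A_ k) x).
    near=> k; split => [A_kx|_]; first by exists k.
    have : (k0 <= k)%N by near: k; exists k0.
    by move=> /A_mono; rewrite subsetEset; apply.
  by apply: nearW => k; split => [A_kx|//]; exists k.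
- apply: (C_lim A_) => //; first by apply: bigcapT_measurable => k; exact: (CA k).1.
  move=> x; have [IAx|nI] := pselect ((\bigcap_k A_ k) x).
    by apply: nearW => k; split => // _; exact: IAx.
  have [k0 nA_k0x] : exists k0, ~ A_ k0 x.
    by apply: contrapT => h; apply: nI => k _; apply: contrapT => hk; apply: h; exists k.
  near=> k; split => [A_kx|/nI//]; exfalso; apply: nA_k0x.
  have : (k0 <= k)%N by near: k; exists k0.
  by move=> /A_mono; rewrite subsetEset; apply.
Unshelve. all: by end_near.
Qed.

End increasing_sub_sigma.

Lemma ler_addnorm (R : realDomainType) (x y : R) : x <= y + `|x - y|.
Proof. by rewrite -lerBlDl ler_norm. Qed.

Lemma pos_part_ge0 (R : realType) (x : R) : 0 <= pos_part x.
Proof. by rewrite /pos_part le_max lexx orbT. Qed.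

Lemma ler_add_pos_part (R : realType) (x y : R) : x <= y + pos_part (x - y).
Proof. by rewrite -lerBlDl /pos_part le_max lexx. Qed.

Section approximation.
Context d (T : measurableType d) (R : realType) (P : probability T R).
Local Open Scope ereal_scope.

(* [U] is close to [X], whose conditional expectation is almost below [Y], which is close to [V]. *)
Lemma set_integral_le_approx G (X Y U V : T -> R) A : sub_sigma G -> G A ->
  Pintegrable P X -> Pintegrable P Y -> Pintegrable P U -> Pintegrable P V ->
  \int[P]_(x in A) (U x)%:E <= \int[P]_(x in A) (V x)%:E + \int[P]_x (`|Y x - V x|)%:E
    + \int[P]_x (pos_part (cond_exp P G X x - Y x))%:E + \int[P]_x (`|X x - U x|)%:E.
Proof.
move=> hG GA iX iY iU iV; have mA := hG.2 _ GA.
have [_ iZ XZ] := is_cond_exp_cond_exp hG iX; set Z := cond_exp P G X in iZ XZ *.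
have UX : \int[P]_(x in A) (U x)%:E <=
    \int[P]_(x in A) (X x)%:E + \int[P]_x (`|X x - U x|)%:E.
  apply: (set_integral_le_add mA iU iX (Pintegrable_norm (PintegrableB iX iU))) => // x.
  by rewrite distrC ler_addnorm.
have ZY := set_integral_le_add mA iZ iY (Pintegrable_pos_part (PintegrableB iZ iY))
  (fun x => pos_part_ge0 _) (fun x => ler_add_pos_part (Z x) (Y x)).
have YV := set_integral_le_add mA iY iV (Pintegrable_norm (PintegrableB iY iV))
  (fun x => normr_ge0 _) (fun x => ler_addnorm (Y x) (V x)).
rewrite -XZ // in UX.
apply: le_trans UX (leeD _ (lexx _)).
exact: le_trans ZY (leeD YV (lexx _)).
Qed.
End approximation.

Section filtration_array.
Context d (T : measurableType d) (R : realType) (Pset : set (probability T R)).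
Context (F : nat -> nat -> set (set T)) (E : nat -> nat -> T -> R) (S : nat -> T -> R).
Hypotheses (hF : filtration_array F) (hE : asymptotic_supermartingale Pset F E)
  (ES : L1_unif_conv Pset E S).
Local Open Scope ereal_scope.

Lemma set_integral_succ_le P n m0 A : Pset P -> F m0 n A ->
  \int[P]_(x in A) (S n.+1 x)%:E <= \int[P]_(x in A) (S n x)%:E.
Proof.
move=> PP Fm0A; apply/lee_addgt0Pr => e e0.
have e3 : (0 < e / 3)%R by rewrite divr_gt0.
have [M1 hM1] := hE n e3.
have [M2 hM2] := ES.2 n _ e3.
have [M3 hM3] := ES.2 n.+1 _ e3.
pose m := maxn m0 (maxn M1 (maxn M2 M3)).
have [m0m M1m M2m M3m] : [/\ m0 <= m, M1 <= m, M2 <= m & M3 <= m]%N by split; lia.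
have FmA : F m n A.
  by apply: (le_sub_sigma_seq (H := F^~ n)) m0m _ Fm0A => k; exact: (hF.2 k n).1.
have [iEn iSn] := ES.1 P PP m n.
have [iEn1 iSn1] := ES.1 P PP m n.+1.
have delta_le : \int[P]_x (pos_part (cond_exp P (F m n) (E m n.+1) x - E m n x))%:E
    <= (e / 3)%:E.
  by have := hM1 m M1m P PP; rewrite /exp_delta_plus asboolT.
apply: le_trans (set_integral_le_approx (hF.1 m n) FmA iEn1 iEn iSn1 iSn) _.
rewrite -2!addeA; apply: leeD (lexx _) _.
apply: le_trans (leeD (hM2 m M2m P PP) (leeD delta_le (hM3 m M3m P PP))) _.
by rewrite -!EFinD lee_fin; lra.
Qed.

End filtration_array.

Unset Implicit Arguments.
Set Strict Implicit.

Theorem mainTheorem8 (d : measure_display) (T : measurableType d) (R : realType)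
  (Pset : set (probability T R))
  (F : nat -> nat -> set (set T)) (E : nat -> nat -> T -> R) (S : nat -> T -> R) :
  filtration_array F ->
  (forall m n x, 0 <= E m n x) ->
  (forall m n, Gmeasurable (F m n) (E m n)) ->
  (forall n, Gmeasurable (F_infty F n) (S n)) ->
  asymptotic_supermartingale Pset F E ->
  L1_unif_conv Pset E S ->
  supermartingale Pset (F_infty F) S.
Proof.
move=> hF _ _ mS hE ES; split => // P PP n.
have [_ iSn] := ES.1 P PP 0%N n.
have [_ iSn1] := ES.1 P PP 0%N n.+1.
have Fn_sub_sigma m : sub_sigma (F m n) := hF.1 m n.
have Fn_nondecreasing m : F m n `<=` F m.+1 n := (hF.2 m n).1.
split => //; apply: cond_exp_le_ae => //.
- exact: sub_sigma_g_sigma_bigcup Fn_sub_sigma.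
- apply: (set_integral_le_g_sigma_bigcup Fn_sub_sigma Fn_nondecreasing iSn1 iSn).
  by move=> m A FA; have := set_integral_succ_le hF hE ES PP FA.
Qed.
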